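(* Let $m<M$ be real numbers and let $x_1,\dots,x_n$ be real numbers with $m\le x_i\le M$ for $i=1,\dots,n$, not all equal. Let $m_r=\frac1n\sum_{i=1}^n(x_i-\bar x)^r$ with $\bar x=\frac1n\sum_{i=1}^n x_i$, let $S=\sqrt{m_2}$, and define $\alpha_3=\sqrt{m_3^2/m_2^3}$, $\alpha_4=m_4/m_2^2$ and $q=(M-m)/S$. Then $$\alpha_4-\alpha_3^2\le\frac{q^2}{4}.$$
   Context: $\alpha_3$ (skewness), $\alpha_4$ (kurtosis) and $q$ (studentized range) are as defined in the claim; $m_r$ is the $r$-th central moment of the numbers $x_1,\dots,x_n$. *)

From mathcomp Require Import all_boot all_order all_algebra.
Set Implicit Arguments. Unset Strict Implicit. Unset Printing Implicit Defensive.
Import Order.TTheory GRing.Theory Num.Theory.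
Local Open Scope ring_scope.

(* Data x_1..x_n indexed by 'I_n; R a real closed field (so that sqrt exists). *)
Definition mean (R : rcfType) (n : nat) (x : 'I_n -> R) : R :=
  (\sum_(i < n) x i) / n%:R.

Definition cmoment (R : rcfType) (n : nat) (x : 'I_n -> R) (r : nat) : R :=
  (\sum_(i < n) (x i - mean x) ^+ r) / n%:R.

Definition stddev (R : rcfType) (n : nat) (x : 'I_n -> R) : R :=
  Num.sqrt (cmoment x 2).

Definition alpha3 (R : rcfType) (n : nat) (x : 'I_n -> R) : R :=
  Num.sqrt (cmoment x 3 ^+ 2 / cmoment x 2 ^+ 3).

Definition alpha4 (R : rcfType) (n : nat) (x : 'I_n -> R) : R :=
  cmoment x 4 / cmoment x 2 ^+ 2.

Definition studentized_range (R : rcfType) (n : nat) (x : 'I_n -> R) (m M : R) : R :=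
  (M - m) / stddev x.

From mathcomp Require Import all_boot all_order all_algebra.
From mathcomp Require Import ring lra.
Set Implicit Arguments. Unset Strict Implicit. Unset Printing Implicit Defensive.
Import Order.TTheory GRing.Theory Num.Theory.
Local Open Scope ring_scope.

(* With [s_r = \sum_i y_i^r], for every [a] one has
   [s_2 \sum_i y_i^2 (y_i - a)^2 = s_4 s_2 - s_3^2 + (a s_2 - s_3)^2].
   If every [y_i] lies within [sqrt K] of [a], the left-hand side is at most
   [K s_2^2], hence so is [s_4 s_2 - s_3^2].  Applied to the centred data
   [y_i = x_i - xbar] and the midpoint [a] of [[m, M]] (so [K = (M - m)^2/4]),
   and divided by [m_2^3], this is the claimed bound, since
   [alpha_4 - alpha_3^2 = (m_4 m_2 - m_3^2) / m_2^3] and [q^2 = (M - m)^2 / m_2]. *)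

Section PowerSums.

Variables (R : realFieldType) (I : finType) (y : I -> R).

Lemma sum_sqr_mul_sqr_le (a K : R) :
  (forall i, (y i - a) ^+ 2 <= K) ->
  \sum_i y i ^+ 2 * (y i - a) ^+ 2 <= K * \sum_i y i ^+ 2.
Proof.
move=> le_K; rewrite mulr_sumr; apply: ler_sum => i _.
by rewrite mulrC ler_wpM2r ?sqr_ge0.
Qed.

Lemma power_sums_det_le (a K : R) :
  (forall i, (y i - a) ^+ 2 <= K) ->
  (\sum_i y i ^+ 4) * (\sum_i y i ^+ 2) - (\sum_i y i ^+ 3) ^+ 2
    <= K * (\sum_i y i ^+ 2) ^+ 2.
Proof.
move=> le_K; set s2 := \sum_i _ ^+ 2; set s3 := \sum_i _ ^+ 3.
set s4 := \sum_i _ ^+ 4.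
have expand : \sum_i y i ^+ 2 * (y i - a) ^+ 2 = s4 - a * 2%:R * s3 + a ^+ 2 * s2.
  rewrite /s4 /s3 /s2 !mulr_sumr -sumrB -big_split /=.
  by apply: eq_bigr => i _; ring.
have s2_ge0 : 0 <= s2 by apply: sumr_ge0 => i _; apply: sqr_ge0.
have := ler_wpM2l s2_ge0 (sum_sqr_mul_sqr_le le_K).
have -> : s2 * (K * s2) = K * s2 ^+ 2 by ring.
have -> : s2 * \sum_i y i ^+ 2 * (y i - a) ^+ 2
          = s4 * s2 - s3 ^+ 2 + (a * s2 - s3) ^+ 2 by rewrite expand; ring.
by apply: le_trans; rewrite lerDl sqr_ge0.
Qed.

End PowerSums.

Lemma sqr_sub_midpoint_le (R : realFieldType) (m M t : R) :
  m <= t <= M -> (t - (m + M) / 2%:R) ^+ 2 <= (M - m) ^+ 2 / 4%:R.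
Proof. by case/andP=> le_mt le_tM; nra. Qed.

Section CentralMoments.

Variables (R : rcfType) (n : nat) (x : 'I_n -> R).

Lemma cmoment_det_le (a K : R) :
  (forall i, (x i - mean x - a) ^+ 2 <= K) ->
  cmoment x 4 * cmoment x 2 - cmoment x 3 ^+ 2 <= K * cmoment x 2 ^+ 2.
Proof.
move=> le_K; rewrite /cmoment.
set s2 := \sum_i _ ^+ 2; set s3 := \sum_i _ ^+ 3; set s4 := \sum_i _ ^+ 4.
have -> : s4 / n%:R * (s2 / n%:R) - (s3 / n%:R) ^+ 2
          = (s4 * s2 - s3 ^+ 2) * n%:R^-1 ^+ 2 by ring.
have -> : K * (s2 / n%:R) ^+ 2 = K * s2 ^+ 2 * n%:R^-1 ^+ 2 by ring.
by rewrite ler_wpM2r ?sqr_ge0 // (power_sums_det_le le_K).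
Qed.

Lemma cmoment2_ge0 : 0 <= cmoment x 2.
Proof. by rewrite divr_ge0 // sumr_ge0 // => i _; apply: sqr_ge0. Qed.

Lemma cmoment2_gt0 : (exists i j, x i != x j) -> 0 < cmoment x 2.
Proof.
case=> i [j neq_ij]; have n_gt0 : (0 < n)%N by case: n i {j neq_ij} => [[]|].
rewrite divr_gt0 ?ltr0n // lt0r sumr_ge0 ?andbT => [|k _]; last exact: sqr_ge0.
apply: contraNneq neq_ij => /psumr_eq0P sum0.
have at_mean k : x k = mean x.
  by apply/eqP; rewrite -subr_eq0 -sqrf_eq0 sum0 // => l _; apply: sqr_ge0.
by rewrite !at_mean.
Qed.

Lemma alpha4_sub_alpha3_sqr : 0 < cmoment x 2 ->
  alpha4 x - alpha3 x ^+ 2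
    = (cmoment x 4 * cmoment x 2 - cmoment x 3 ^+ 2) / cmoment x 2 ^+ 3.
Proof.
move=> m2_gt0; rewrite /alpha4 /alpha3 sqr_sqrtr; last first.
  by rewrite divr_ge0 ?sqr_ge0 ?exprn_ge0 ?ltW.
by field; rewrite gt_eqF.
Qed.

Lemma studentized_range_sqr (m M : R) :
  studentized_range x m M ^+ 2 = (M - m) ^+ 2 / cmoment x 2.
Proof. by rewrite /studentized_range /stddev expr_div_n sqr_sqrtr ?cmoment2_ge0. Qed.

End CentralMoments.

Theorem corollary2p5 (R : rcfType) (n : nat) (x : 'I_n -> R) (m M : R) :
  m < M ->
  (forall i, m <= x i <= M) ->
  (exists i j, x i != x j) ->
  alpha4 x - alpha3 x ^+ 2 <= studentized_range x m M ^+ 2 / 4%:R.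
Proof.
(* [m < M] already follows from the other two hypotheses. *)
move=> _ x_in not_const; have m2_gt0 := cmoment2_gt0 not_const.
set K := (M - m) ^+ 2 / 4%:R.
have det_le : cmoment x 4 * cmoment x 2 - cmoment x 3 ^+ 2 <= K * cmoment x 2 ^+ 2.
  apply: (@cmoment_det_le _ _ _ ((m + M) / 2%:R - mean x)) => i.
  have -> : x i - mean x - ((m + M) / 2%:R - mean x) = x i - (m + M) / 2%:R by ring.
  exact: sqr_sub_midpoint_le.
rewrite alpha4_sub_alpha3_sqr // studentized_range_sqr.
have -> : (M - m) ^+ 2 / cmoment x 2 / 4%:R = K * cmoment x 2 ^+ 2 / cmoment x 2 ^+ 3.
  by rewrite /K; field; rewrite gt_eqF.
by rewrite ler_pM2r // invr_gt0 exprn_gt0.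
Qed.
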